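(* Let $W$ be a subcomplex of a simplicial complex $K$ on $[m]$, and let $\mathcal I_{K\setminus W}$ be the kernel of the natural quotient map $\mathbb Z[K]\to\mathbb Z[W]$. Then the annihilator $(0:_{\mathbb Z[K]}\mathcal I_{K\setminus W})$ is the ideal generated by the monomials $x_\sigma$ with $\sigma\in W\setminus\overline{K\setminus W}$.
   Context: $\mathbb Z[K]=\mathbb Z[x_1,\dots,x_m]/\langle x_\sigma:\sigma\notin K\rangle$ is the Stanley–Reisner ring, $x_\sigma=\prod_{i\in\sigma}x_i$. For a subset $Y$ of a simplicial complex, $\overline Y$ denotes the smallest subcomplex containing $Y$ (all subsets of members of $Y$). *)

From HB Require Import structures.
From mathcomp Require Import all_boot all_order all_algebra.
From mathcomp Require Import mpoly.
Set Implicit Arguments. Unset Strict Implicit. Unset Printing Implicit Defensive.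
Import GRing.Theory.
Local Open Scope ring_scope.

Definition is_complex (m : nat) (K : {set {set 'I_m}}) : Prop :=
  forall s t : {set 'I_m}, s \in K -> t \subset s -> t \in K.

Definition cl (m : nat) (Y : {set {set 'I_m}}) : {set {set 'I_m}} :=
  [set t : {set 'I_m} | [exists s in Y, t \subset s]].

Definition xmon (m : nat) (s : {set 'I_m}) : {mpoly int[m]} :=
  \prod_(i in s) 'X_i.

Definition in_ideal (R : comPzRingType) (S : seq R) (f : R) : Prop :=
  exists cs : seq R, f = \sum_(i < size S) cs`_i * S`_i.

Definition mons (m : nat) (A : {set {set 'I_m}}) : seq {mpoly int[m]} :=
  [seq xmon s | s <- enum A].

Definition SR_ideal (m : nat) (K : {set {set 'I_m}}) (f : {mpoly int[m]}) : Prop :=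
  in_ideal (mons (~: K)) f.

(* Elements of Z[K] are represented by polynomials f (class [f]);
   [f] = [g] in Z[K] iff f - g \in I_K. *)
Definition SR_eq (m : nat) (K : {set {set 'I_m}}) (f g : {mpoly int[m]}) : Prop :=
  SR_ideal K (f - g).

(* [f]_K lies in I_{K\W} = ker (Z[K] -> Z[W], [f]_K |-> [f]_W)
   iff [f]_W = 0 in Z[W]. *)
Definition in_ker_restr (m : nat) (K W : {set {set 'I_m}}) (f : {mpoly int[m]}) : Prop :=
  SR_eq W f 0.

Definition in_annihilator (m : nat) (K W : {set {set 'I_m}}) (f : {mpoly int[m]}) : Prop :=
  forall g : {mpoly int[m]}, in_ker_restr K W g -> SR_eq K (f * g) 0.

Definition in_SR_ideal_gen (m : nat) (K A : {set {set 'I_m}}) (f : {mpoly int[m]}) : Prop :=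
  exists cs : seq {mpoly int[m]},
    SR_eq K f (\sum_(i < size (mons A)) cs`_i * (mons A)`_i).

From HB Require Import structures.
From mathcomp Require Import all_boot all_order all_algebra.
From mathcomp Require Import mpoly.
Set Implicit Arguments. Unset Strict Implicit. Unset Printing Implicit Defensive.
Import GRing.Theory.
Local Open Scope ring_scope.

(* A polynomial lies in the Stanley-Reisner ideal I_K exactly when none of its
   monomials is supported on a face of K.  Hence, for a face sigma of K and
   g in I_W, the product x_sigma g lies in I_K iff sigma joined with the support
   of any monomial of g outside W is a non-face of K; this is automatic when
   sigma is in W but not below a face of K \ W.  Conversely, if f annihilates
   I_{K\W}, testing f against x_tau for tau in K \ W (which lies in I_W) shows
   that every monomial of f supported on a face of K is supported on a face of
   W \ cl(K \ W), and the remaining monomials of f vanish in Z[K]. *)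

Section InIdeal.
Variables (R : comPzRingType) (S : seq R).

Lemma in_ideal0 : in_ideal S 0.
Proof. by exists [::]; rewrite big1 // => i _; rewrite nth_nil mul0r. Qed.

Lemma in_idealD f g : in_ideal S f -> in_ideal S g -> in_ideal S (f + g).
Proof.
case=> cs -> [ds ->]; exists (mkseq (fun i => cs`_i + ds`_i) (size S)).
by rewrite -big_split; apply: eq_bigr => i _; rewrite nth_mkseq // mulrDl.
Qed.

Lemma in_idealMl g f : in_ideal S f -> in_ideal S (g * f).
Proof.
case=> cs ->; exists (mkseq (fun i => g * cs`_i) (size S)).
by rewrite mulr_sumr; apply: eq_bigr => i _; rewrite nth_mkseq // mulrA.
Qed.

Lemma mem_in_ideal j : (j < size S)%N -> in_ideal S S`_j.
Proof.
move=> ltjS; exists (mkseq (fun i => ((i == j)%:R : R)) (size S)).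
rewrite (bigD1 (Ordinal ltjS)) //= big1 ?addr0; first by rewrite nth_mkseq // eqxx mul1r.
move=> i neqij; rewrite nth_mkseq //.
suff /negbTE-> : val i != j by rewrite mul0r.
by apply: contra neqij => /eqP eqij; apply/eqP/val_inj.
Qed.

Lemma in_ideal_sum (I : Type) (r : seq I) (P : pred I) (F : I -> R) :
  (forall i, P i -> in_ideal S (F i)) -> in_ideal S (\sum_(i <- r | P i) F i).
Proof. by apply: big_ind; [exact: in_ideal0 | exact: in_idealD]. Qed.

End InIdeal.

Section Monomials.
Variable m : nat.
Implicit Types (a b : 'X_{1..m}) (s t : {set 'I_m}) (p q : {mpoly int[m]})
  (A K : {set {set 'I_m}}).

Definition mnm_supp a : {set 'I_m} := [set i | a i != 0%N].

Definition mnm_of_set s : 'X_{1..m} := (\sum_(i in s) U_(i))%MM.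

Lemma mnm_of_setE s i : mnm_of_set s i = (i \in s).
Proof.
rewrite /mnm_of_set mnm_sumE; have [si | nsi] := boolP (i \in s).
  rewrite (bigD1 i) //= mnm1E eqxx big1 ?addn0 // => j /andP [_ neqji].
  by rewrite mnm1E (negbTE neqji).
by rewrite big1 // => j sj; rewrite mnm1E; case: eqP => // eqji; rewrite -eqji sj in nsi.
Qed.

Lemma xmonE s : xmon s = 'X_[mnm_of_set s].
Proof.
by rewrite /xmon /mnm_of_set
  (big_morph (fun a => 'X_[a] : {mpoly int[m]}) (@mpolyXD _ _) (@mpolyX0 _ _)).
Qed.

Lemma mnm_supp_of_set s : mnm_supp (mnm_of_set s) = s.
Proof. by apply/setP => i; rewrite inE mnm_of_setE; case: (i \in s). Qed.

Lemma mnm_suppD a b : mnm_supp (a + b)%MM = mnm_supp a :|: mnm_supp b.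
Proof. by apply/setP => i; rewrite !inE mnmDE addn_eq0 negb_and. Qed.

Lemma mnm_of_supp_le a : (mnm_of_set (mnm_supp a) <= a)%MM.
Proof. by apply/mnm_lepP => i; rewrite mnm_of_setE inE; case: (a i). Qed.

Lemma nth_mons A (j : nat) : (j < size (mons A))%N ->
  (mons A)`_j = xmon (nth set0 (enum A) j) /\ nth set0 (enum A) j \in A.
Proof.
rewrite size_map => ltj; rewrite (nth_map set0) //.
by split => //; rewrite -mem_enum mem_nth.
Qed.

Lemma xmon_in_mons A s : s \in A -> in_ideal (mons A) (xmon s).
Proof.
move=> As; have ltsA : (index s (enum A) < size (mons A))%N.
  by rewrite size_map index_mem mem_enum.
have := @mem_in_ideal _ (mons A) _ ltsA.
by rewrite /mons (nth_map set0) ?nth_index ?mem_enum // -(size_map (@xmon m)).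
Qed.

(* Every monomial 'X_[a] is a multiple of x_(supp a). *)
Lemma in_ideal_mons_sum A (r : seq 'X_{1..m}) (c : 'X_{1..m} -> int) :
  (forall a, a \in r -> mnm_supp a \in A) ->
  in_ideal (mons A) (\sum_(a <- r) c a *: 'X_[a]).
Proof.
move=> rA; rewrite big_seq; apply: in_ideal_sum => a /rA Aa.
rewrite -(submK (mnm_of_supp_le a)) mpolyXD scalerAl -xmonE.
exact/in_idealMl/xmon_in_mons.
Qed.

Definition avoids K p := forall a, a \in msupp p -> mnm_supp a \notin K.

Lemma avoids0 K : avoids K 0.
Proof. by move=> a; rewrite msupp0. Qed.

Lemma avoidsD K p q : avoids K p -> avoids K q -> avoids K (p + q).
Proof.
move=> Kp Kq a; rewrite mcoeff_msupp mcoeffD => pqa.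
have [/Kp // | ] := boolP (a \in msupp p); rewrite mcoeff_msupp negbK => /eqP pa0.
by apply: Kq; rewrite mcoeff_msupp; rewrite pa0 add0r in pqa.
Qed.

Lemma avoidsM K p q :
  (forall a b, a \in msupp p -> b \in msupp q -> mnm_supp (a + b)%MM \notin K) ->
  avoids K (p * q).
Proof. by move=> pqK a /msuppM_le /allpairsP [[a1 a2] /= [p1 q2 ->]]; apply: pqK. Qed.

Lemma avoids_xmonM K s p :
  (forall b, b \in msupp p -> s :|: mnm_supp b \notin K) -> avoids K (xmon s * p).
Proof.
move=> sp; rewrite xmonE; apply: avoidsM => a b; rewrite msuppX mem_seq1 => /eqP->.
by rewrite mnm_suppD mnm_supp_of_set; apply: sp.
Qed.

Lemma avoids_SR_ideal K p : avoids K p -> SR_ideal K p.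
Proof.
move=> Kp; rewrite (mpolyE p); apply: in_ideal_mons_sum => a /Kp.
by rewrite inE.
Qed.

Lemma SR_ideal_avoids K p : is_complex K -> SR_ideal K p -> avoids K p.
Proof.
move=> complexK [cs ->]; apply: big_ind; [exact: avoids0 | exact: avoidsD |].
move=> i _; have [-> nKs] := nth_mons (ltn_ord i); rewrite mulrC.
apply: avoids_xmonM => b _; rewrite inE in nKs.
by apply: contra nKs => Ksb; apply: complexK Ksb (subsetUl _ _).
Qed.

Lemma in_SR_ideal_gen_msupp K A f :
  (forall a, a \in msupp f -> mnm_supp a \in K -> mnm_supp a \in A) ->
  in_SR_ideal_gen K A f.
Proof.
move=> fA; pose fK := \sum_(a <- msupp f | mnm_supp a \in K) f@_a *: 'X_[a].
have [cs fKE] : in_ideal (mons A) fK.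
  rewrite /fK -big_filter; apply: in_ideal_mons_sum => a.
  by rewrite mem_filter => /andP [Ka fa]; apply: fA.
exists cs; rewrite /SR_eq -fKE.
have -> : f - fK = \sum_(a <- msupp f | mnm_supp a \notin K) f@_a *: 'X_[a].
  by rewrite {1}(mpolyE f) (bigID (fun a => mnm_supp a \in K)) /= addrC addrK.
by rewrite -big_filter; apply: in_ideal_mons_sum => a; rewrite mem_filter inE => /andP [].
Qed.

Section Annihilator.
Variables K W : {set {set 'I_m}}.
Hypotheses (complexK : is_complex K) (complexW : is_complex W).

Lemma in_ker_restr_xmon t : t \notin W -> in_ker_restr K W (xmon t).
Proof.
by move=> nWt; rewrite /in_ker_restr /SR_eq subr0; apply: xmon_in_mons; rewrite inE.
Qed.

(* Test f against x_t: the monomial 'X_[a + t] survives in f * x_t. *)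
Lemma annihilator_msupp f a :
  in_annihilator K W f -> a \in msupp f -> mnm_supp a \in K ->
  mnm_supp a \in W :\: cl (K :\: W).
Proof.
move=> annf fa Ka.
have join_nonface t : t \in K :\: W -> mnm_supp a :|: t \notin K.
  rewrite inE => /andP [nWt _].
  have := SR_ideal_avoids complexK (annf _ (in_ker_restr_xmon nWt)).
  rewrite subr0 xmonE => /(_ (a + mnm_of_set t)%MM); rewrite mnm_suppD mnm_supp_of_set.
  by apply; rewrite mcoeff_msupp addmC mcoeffMX -mcoeff_msupp.
rewrite !inE; apply/andP; split.
  apply/existsP => -[t /andP [KWt at_]]; move: (join_nonface t KWt).
  by rewrite (setUidPr at_); move: KWt; rewrite inE => /andP [_ ->].
apply/idPn => nWa; have := join_nonface (mnm_supp a).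
by rewrite setUid Ka inE nWa Ka => /(_ isT).
Qed.

Lemma xmon_annihilator s : s \in W :\: cl (K :\: W) -> in_annihilator K W (xmon s).
Proof.
rewrite !inE => /andP [nclKWs Ws] g kerg; rewrite /SR_eq subr0.
apply/avoids_SR_ideal/avoids_xmonM => b /(SR_ideal_avoids complexW).
rewrite -[g]subr0 => /(_ kerg) nWb; apply/negP => Ksb.
move/negP: nclKWs; apply; apply/existsP; exists (s :|: mnm_supp b).
rewrite !inE Ksb subsetUl !andbT.
by apply: contra nWb => Wsb; apply: complexW Wsb (subsetUr _ _).
Qed.

Lemma in_annihilator_gen A f :
  (forall s, s \in A -> in_annihilator K W (xmon s)) ->
  in_SR_ideal_gen K A f -> in_annihilator K W f.
Proof.
move=> annA [cs]; set h := \sum_(i < _) _ => fh g kerg; rewrite /SR_eq subr0.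
have -> : f * g = g * (f - h) + h * g by rewrite mulrBr [h * g]mulrC subrK mulrC.
apply: in_idealD; first exact: in_idealMl.
rewrite /h mulr_suml; apply: in_ideal_sum => i _; rewrite -mulrA; apply: in_idealMl.
have [-> As] := nth_mons (ltn_ord i).
by rewrite -[_ * g]subr0; apply: annA.
Qed.

End Annihilator.
End Monomials.

Theorem lemma4p5 (m : nat) (K W : {set {set 'I_m}}) :
  is_complex K -> is_complex W -> W \subset K ->
  forall f : {mpoly int[m]},
    in_annihilator K W f <-> in_SR_ideal_gen K (W :\: cl (K :\: W)) f.
Proof.
move=> complexK complexW _ f; split.
- move=> annf; apply: in_SR_ideal_gen_msupp => a.
  exact: annihilator_msupp.
- apply: in_annihilator_gen => s.
  exact: xmon_annihilator.
Qed.
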